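(* Let $\otimes$ be a $T$-norm and $\oplus$ a $T$-conorm, and let $\Phi(\oplus)(x,y)=1-((1-x)\oplus(1-y))$. If $\otimes$ and $\Phi(\oplus)$ are both Archimedean copulas, then $(\otimes,\oplus)$ satisfies the rearrangement inequality and the dual rearrangement inequality.
   Context: A uninorm is a function $\otimes:[0,1]^2\to[0,1]$ that is commutative, associative, monotonic ($x\leq y$ implies $x\otimes z\leq y\otimes z$), and has an identity element; a $T$-norm is a uninorm with identity $1$, a $T$-conorm one with identity $0$. A $T$-norm $\otimes$ is Archimedean if for all $0<x,y<1$ there exists $n$ with $x\otimes\cdots\otimes x$ ($n$ times) $\leq y$. A copula is a function $c:[0,1]^2\to[0,1]$ that satisfies neutrality of $1$, is monotonic, and satisfies: for all $0\leq x\leq y\leq1$, $0\leq z\leq w\leq1$, $c(x,w)-c(x,z)\leq c(y,w)-c(y,z)$. $(\otimes,\oplus)$ satisfies the rearrangement inequality if for every $n\geq1$, all $0\leq x_1\leq\cdots\leq x_n\leq 1$, $0\leq y_1\leq\cdots\leq y_n\leq 1$ and every permutation $\sigma$ of $\{1,\dots,n\}$, $$(x_n\otimes y_1)\oplus\cdots\oplus(x_1\otimes y_n)\leq (x_{\sigma(1)}\otimes y_1)\oplus\cdots\oplus(x_{\sigma(n)}\otimes y_n)\leq (x_1\otimes y_1)\oplus\cdots\oplus(x_n\otimes y_n),$$ and the dual rearrangement inequality if for all such data $$(x_n\oplus y_1)\otimes\cdots\otimes(x_1\oplus y_n)\geq (x_{\sigma(1)}\oplus y_1)\otimes\cdots\otimes(x_{\sigma(n)}\oplus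 y_n)\geq (x_1\oplus y_1)\otimes\cdots\otimes(x_n\oplus y_n).$$ *)

From HB Require Import structures.
From mathcomp Require Import all_boot all_order all_algebra perm.
From mathcomp Require Import reals.
Set Implicit Arguments. Unset Strict Implicit. Unset Printing Implicit Defensive.
Import Order.TTheory GRing.Theory Num.Theory.
Local Open Scope ring_scope.

Section Defs.
Variable R : realType.

Definition in01 (x : R) : Prop := 0 <= x <= 1.

Definition uninorm_with (op : R -> R -> R) (e : R) : Prop :=
  in01 e /\
  [/\ (forall x y, in01 x -> in01 y -> in01 (op x y)),
      (forall x y, in01 x -> in01 y -> op x y = op y x),
      (forall x y z, in01 x -> in01 y -> in01 z -> op x (op y z) = op (op x y) z),
      (forall x y z, in01 x -> in01 y -> in01 z -> x <= y -> op x z <= op y z)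
    & (forall x, in01 x -> op e x = x)].

Definition uninorm (op : R -> R -> R) : Prop := exists e, uninorm_with op e.
Definition tnorm (op : R -> R -> R) : Prop := uninorm_with op 1.
Definition tconorm (op : R -> R -> R) : Prop := uninorm_with op 0.

Definition tpow (op : R -> R -> R) (x : R) (n : nat) : R := foldr op 1 (nseq n x).

Definition archimedean_tnorm (op : R -> R -> R) : Prop :=
  tnorm op /\
  forall x y, 0 < x < 1 -> 0 < y < 1 -> exists n : nat, tpow op x n <= y.

Definition copula (c : R -> R -> R) : Prop :=
  [/\ (forall x y, in01 x -> in01 y -> in01 (c x y)),
      (forall x, in01 x -> c x 1 = x /\ c 1 x = x),
      (forall x y z, in01 x -> in01 y -> in01 z -> x <= y -> c x z <= c y z),
      (forall x y z, in01 x -> in01 y -> in01 z -> x <= y -> c z x <= c z y)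
    & (forall x y z w, 0 <= x -> x <= y -> y <= 1 -> 0 <= z -> z <= w -> w <= 1 ->
          c x w - c x z <= c y w - c y z)].

Definition archimedean_copula (c : R -> R -> R) : Prop :=
  copula c /\ archimedean_tnorm c.

Definition Phi (op : R -> R -> R) : R -> R -> R :=
  fun x y => 1 - op (1 - x) (1 - y).

(* Iterated operation a_1 op (a_2 op ( ... op a_n)); with identity e appended,
   which does not change the value since e is the identity. *)
Definition iter_op (op : R -> R -> R) (e : R) (s : seq R) : R := foldr op e s.

Definition sorted_in01 (n : nat) (x : 'I_n -> R) : Prop :=
  (forall i, in01 (x i)) /\ (forall i j : 'I_n, (i <= j)%N -> x i <= x j).

Definition rearrangement_ineq (tn tc : R -> R -> R) : Prop :=
  forall (n : nat), (0 < n)%N -> forall (x y : 'I_n -> R) (s : 'S_n),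
    sorted_in01 x -> sorted_in01 y ->
    iter_op tc 0 [seq tn (x (rev_ord i)) (y i) | i <- enum 'I_n]
      <= iter_op tc 0 [seq tn (x (s i)) (y i) | i <- enum 'I_n]
    /\ iter_op tc 0 [seq tn (x (s i)) (y i) | i <- enum 'I_n]
      <= iter_op tc 0 [seq tn (x i) (y i) | i <- enum 'I_n].

Definition dual_rearrangement_ineq (tn tc : R -> R -> R) : Prop :=
  forall (n : nat), (0 < n)%N -> forall (x y : 'I_n -> R) (s : 'S_n),
    sorted_in01 x -> sorted_in01 y ->
    iter_op tn 1 [seq tc (x (s i)) (y i) | i <- enum 'I_n]
      <= iter_op tn 1 [seq tc (x (rev_ord i)) (y i) | i <- enum 'I_n]
    /\ iter_op tn 1 [seq tc (x i) (y i) | i <- enum 'I_n]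
      <= iter_op tn 1 [seq tc (x (s i)) (y i) | i <- enum 'I_n].

End Defs.

From mathcomp Require Import all_boot all_order all_algebra perm.
From mathcomp Require Import classical_sets reals.
From mathcomp Require Import lra zify.
Set Implicit Arguments. Unset Strict Implicit. Unset Printing Implicit Defensive.
Import Order.TTheory GRing.Theory Num.Theory.
Local Open Scope ring_scope.

(* The key fact is an exchange inequality for a t-norm C that is a copula:
   C p q <= C r s whenever q <= r <= p and p + q <= r + s.  As C r is
   1-Lipschitz with C r 0 = 0 and C r 1 = r, some w solves C r w = q; then
   2-increasingness gives C p w <= q + p - r <= s, and associativity yields
   C p q = C (C p w) r <= C s r.  Applied to ⊗ and to Φ(⊕), whose dual is ⊕,
   it gives the two-term inequalities (b⊗c) ⊕ (a⊗d) <= (a⊗c) ⊕ (b⊗d) and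
   (a⊕c) ⊗ (b⊕d) <= (b⊕c) ⊗ (a⊕d) for a <= b, c <= d.  The n-term
   inequalities follow by sorting the permutation with transpositions, each
   of which moves the iterated sum (product) monotonically. *)

Lemma in01_0 (R : realType) : in01 (0 : R).
Proof. by rewrite /in01 lexx ler01. Qed.

Lemma in01_1 (R : realType) : in01 (1 : R).
Proof. by rewrite /in01 ler01 lexx. Qed.

Lemma in01_1B (R : realType) (a : R) : in01 a -> in01 (1 - a).
Proof. by move=> /andP[a0 a1]; apply/andP; split; lra. Qed.

Lemma upper_lipschitz_ivt (R : realType) (f : R -> R) (q : R) :
  (forall u v, in01 u -> in01 v -> u <= v -> f v - f u <= v - u) ->
  f 0 <= q <= f 1 -> exists2 w, in01 w & f w = q.
Proof.
move=> lip /andP[f0q qf1].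
pose E : set R := fun w => in01 w /\ f w <= q.
have E0 : E 0 by split; [exact: in01_0 | ].
have supE : has_sup E by split; [exists 0 | exists 1 => w [/andP[]]].
have ubE := sup_upper_bound supE.
set w := sup E in ubE *.
have w0 : 0 <= w by exact: ubE.
have w1 : w <= 1 by apply: ge_sup; [exists 0 | move=> v [/andP[]]].
have w01 : in01 w by apply/andP.
exists w => //; apply/eqP; rewrite eq_le; apply/andP; split.
- rewrite leNgt; apply/negP => qfw.
  have fwq0 : 0 < f w - q by rewrite subr_gt0.
  have [v [v01 fvq] wv] := sup_adherent fwq0 supE.
  have := lip v w v01 w01 (ubE v (conj v01 fvq)); rewrite -/w in wv; lra.
- rewrite leNgt; apply/negP => fwq.
  have w1' : w < 1 by rewrite lt_neqAle w1 andbT; apply: contraTneq fwq => ->; rewrite -leNgt.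
  pose d := Num.min (q - f w) (1 - w).
  have d0 : 0 < d by rewrite lt_min !subr_gt0 fwq w1'.
  have [dq d1] : d <= q - f w /\ d <= 1 - w by rewrite !ge_min !lexx orbT.
  have wd01 : in01 (w + d) by apply/andP; split; lra.
  have Ewd : E (w + d) by split => //; have := lip w (w + d) w01 wd01 ltac:(lra); lra.
  have := ubE _ Ewd; lra.
Qed.

Lemma copula_2increasing (R : realType) (C : R -> R -> R) a b c d :
  copula C -> in01 a -> in01 b -> in01 c -> in01 d -> a <= b -> c <= d ->
  C a d + C b c <= C a c + C b d.
Proof.
case=> _ _ _ _ C2inc /andP[a0 _] /andP[_ b1] /andP[c0 _] /andP[_ d1] ab cd.
have := C2inc a b c d a0 ab b1 c0 cd d1; lra.
Qed.

Section CopulaTnorm.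
Variables (R : realType) (C : R -> R -> R).
Hypotheses (tnormC : tnorm C) (copulaC : copula C).

Lemma tnorm_r0 r : in01 r -> C r 0 = 0.
Proof.
case: tnormC => _ [C01 _ _ Cmono C1x] r01.
have /andP[Cr0 _] := C01 r 0 r01 (in01_0 R).
apply/eqP; rewrite eq_le Cr0 andbT -{2}(C1x 0 (in01_0 R)).
by apply: Cmono => //; [exact: in01_1 | exact: in01_0 | case/andP: r01].
Qed.

Lemma copula_lipschitzr r u v :
  in01 r -> in01 u -> in01 v -> u <= v -> C r v - C r u <= v - u.
Proof.
case: (copulaC) => _ C1 _ _ _ r01 u01 v01 uv.
have r1 : r <= 1 by case/andP: r01.
have := copula_2increasing copulaC r01 (in01_1 R) u01 v01 r1 uv.
rewrite (C1 v v01).2 (C1 u u01).2; lra.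
Qed.

Lemma copula_tnorm_exchange p q r s :
  in01 p -> in01 q -> in01 r -> in01 s ->
  q <= r -> r <= p -> p + q <= r + s -> C p q <= C r s.
Proof.
case: tnormC => _ [C01 CC CA Cmono _]; case: (copulaC) => _ C1 _ _ _.
move=> p01 q01 r01 s01 qr rp pqrs.
have [w w01 Crw] : exists2 w, in01 w & C r w = q.
  apply: upper_lipschitz_ivt; first by move=> u v; exact: copula_lipschitzr.
  by rewrite tnorm_r0 // (C1 r r01).1; case/andP: q01 => -> _.
have Cpw : C p w <= s.
  have w1 : w <= 1 by case/andP: w01.
  have := copula_2increasing copulaC r01 p01 w01 (in01_1 R) rp w1.
  rewrite (C1 r r01).1 (C1 p p01).1 Crw; lra.
rewrite -Crw (CC r w) // CA // (CC r s) //.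
by apply: Cmono => //; apply: C01.
Qed.

End CopulaTnorm.

Lemma Phi_dualE (R : realType) (op : R -> R -> R) u v :
  op u v = 1 - Phi op (1 - u) (1 - v).
Proof. by rewrite /Phi !subKr. Qed.

Lemma uninorm_monor (R : realType) (op : R -> R -> R) e x y z :
  uninorm_with op e -> in01 x -> in01 y -> in01 z -> x <= y -> op z x <= op z y.
Proof.
case=> _ [_ opC _ op_monol _] x01 y01 z01 xy.
by rewrite !(opC z) //; apply: op_monol.
Qed.

Lemma tconorm_tnorm_exchange (R : realType) (tn tc : R -> R -> R) :
  copula tn -> tnorm (Phi tc) -> copula (Phi tc) ->
  forall a b c d, in01 a -> in01 b -> in01 c -> in01 d -> a <= b -> c <= d ->
  tc (tn b c) (tn a d) <= tc (tn a c) (tn b d).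
Proof.
move=> copula_tn tnormP copulaP a b c d a01 b01 c01 d01 ab cd.
case: (copula_tn) => tn01 _ tn_monol tn_monor _.
have tn_2inc := copula_2increasing copula_tn a01 b01 c01 d01 ab cd.
have tn_ac_bc := tn_monol _ _ _ a01 b01 c01 ab.
have tn_bc_bd := tn_monor _ _ _ c01 d01 b01 cd.
rewrite !(Phi_dualE tc) lerD2l lerN2.
by apply: copula_tnorm_exchange => //; try (apply: in01_1B; exact: tn01); lra.
Qed.

Lemma tnorm_tconorm_exchange (R : realType) (tn tc : R -> R -> R) :
  tnorm tn -> copula tn -> tconorm tc -> copula (Phi tc) ->
  forall a b c d, in01 a -> in01 b -> in01 c -> in01 d -> a <= b -> c <= d ->
  tn (tc a c) (tc b d) <= tn (tc b c) (tc a d).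
Proof.
move=> tnorm_tn copula_tn tconorm_tc copulaP a b c d a01 b01 c01 d01 ab cd.
have [_ [tc01 _ _ tc_monol _]] := tconorm_tc.
have [_ [_ tnC _ _ _]] := tnorm_tn.
have tc_2dec : tc b d + tc a c <= tc b c + tc a d.
  have := copula_2increasing copulaP (in01_1B b01) (in01_1B a01) (in01_1B d01) (in01_1B c01).
  rewrite /Phi !subKr !lerD2l !lerN2 => /(_ ab cd); lra.
have tc_ac_bc := tc_monol _ _ _ a01 b01 c01 ab.
have tc_bc_bd := uninorm_monor tconorm_tc c01 d01 b01 cd.
rewrite tnC; try exact: tc01.
by apply: copula_tnorm_exchange => //; try exact: tc01; lra.
Qed.

Lemma perm_tperm_ind n (rho : 'S_n) (P : 'S_n -> Prop) :
  P rho ->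
  (forall (s : 'S_n) (i j : 'I_n), (i < j)%N ->
     (forall k : 'I_n, (k < i)%N -> s k = rho k) -> s j = rho i ->
     P (tperm i j * s)%g -> P s) ->
  forall s, P s.
Proof.
move=> Prho step s.
have [m] := ubnP #|[pred k | s k != rho k]|; elim: m s => // m IH s.
rewrite ltnS => card_s.
case: (pickP [pred k | s k != rho k]) => [k0 sk0 | s_rho]; last first.
  by have -> : s = rho by apply/permP => k; apply/eqP/negbFE/s_rho.
case: (arg_minnP val sk0) => i si i_min.
pose j := (s^-1)%g (rho i).
have sj : s j = rho i by rewrite permKV.
have below_i (k : 'I_n) : (k < i)%N -> s k = rho k.
  by move=> ki; apply/eqP/negbNE/negP => /i_min; rewrite leqNgt ki.
have ji : j != i by apply/eqP => eji; move: si; rewrite /= -{1}eji sj eqxx.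
have ij : (i < j)%N.
  rewrite ltn_neqAle eq_sym ji /= leqNgt; apply/negP => /below_i.
  by rewrite sj => /perm_inj eij; rewrite eij eqxx in ji.
apply: (step s i j ij below_i sj); apply: IH.
apply: leq_trans card_s.
rewrite [#|[pred k | s k != rho k]|](cardD1 i) inE (negPf si) add1n ltnS.
apply: subset_leq_card; apply/fintype.subsetP => k; rewrite !inE permM.
have [-> | ki] := eqVneq k i; first by rewrite tpermL sj eqxx.
have [-> | kj] := eqVneq k j; last by rewrite tpermD // eq_sym.
by rewrite tpermR sj => _ /=; apply: contra_neq ji => /perm_inj ->.
Qed.

Section FoldRearrangement.
Variables (R : realType) (op : R -> R -> R) (e : R) (lec : rel R).
Hypothesis op_uninorm : uninorm_with op e.
Hypotheses (lec_refl : reflexive lec) (lec_trans : transitive lec).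
Hypothesis lec_opl : forall u v w, in01 u -> in01 v -> in01 w ->
  lec u v -> lec (op u w) (op v w).

Lemma foldr_in01 (I : Type) (f : I -> R) (s : seq I) :
  (forall k, in01 (f k)) -> in01 (foldr op e (map f s)).
Proof.
case: op_uninorm => e01 [op01 _ _ _ _] f01.
by elim: s => [|k s IH] //=; apply: op01.
Qed.

Lemma foldr_rem (I : eqType) (f : I -> R) (s : seq I) a :
  a \in s -> (forall k, in01 (f k)) ->
  foldr op e (map f s) = op (f a) (foldr op e (map f (rem a s))).
Proof.
case: op_uninorm => _ [_ opC opA _ _] + f01.
elim: s => [|b s IH] //=; rewrite in_cons.
have [-> _ | ba /= as_] := eqVneq b a; first by [].
by rewrite IH // !opA ?(opC (f b)) //; exact: foldr_in01.
Qed.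

Lemma foldr_lec_swap (I : eqType) (s : seq I) (f f' : I -> R) (i j : I) :
  uniq s -> i \in s -> j \in s -> i != j ->
  (forall k, in01 (f k)) -> (forall k, in01 (f' k)) ->
  (forall k, k != i -> k != j -> f' k = f k) ->
  lec (op (f' i) (f' j)) (op (f i) (f j)) ->
  lec (foldr op e (map f' s)) (foldr op e (map f s)).
Proof.
case: op_uninorm => _ [op01 _ opA _ _] s_uniq si sj ij f01 f'01 ff' lec_ij.
have sj' : j \in rem i s by rewrite mem_rem_uniq // inE eq_sym ij.
rewrite (foldr_rem si f'01) (foldr_rem si f01).
rewrite (foldr_rem sj' f'01) (foldr_rem sj' f01) !opA //; try exact: foldr_in01.
have -> : map f' (rem j (rem i s)) = map f (rem j (rem i s)).
  apply/eq_in_map => k; rewrite mem_rem_uniq ?rem_uniq // !inE mem_rem_uniq // !inE.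
  by case/andP=> kj /andP[ki _]; exact: ff'.
by apply: lec_opl => //; [exact: op01 | exact: op01 | exact: foldr_in01].
Qed.

Variable g : R -> R -> R.
Hypothesis g_in01 : forall u v, in01 u -> in01 v -> in01 (g u v).
Hypothesis g_exchange : forall a b c d, in01 a -> in01 b -> in01 c -> in01 d ->
  a <= b -> c <= d -> lec (op (g b c) (g a d)) (op (g a c) (g b d)).
Variables (n : nat) (x y : 'I_n -> R).
Hypotheses (x_sorted : sorted_in01 x) (y_sorted : sorted_in01 y).

Let F (t : 'S_n) := foldr op e [seq g (x (t k)) (y k) | k <- enum 'I_n].

Lemma foldr_lec_tperm (t : 'S_n) (i j : 'I_n) :
  (i < j)%N -> x (t j) <= x (t i) -> lec (F t) (F (tperm i j * t)).
Proof.
case: x_sorted y_sorted => [x01 _] [y01 y_mono] ij xji.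
have i_ne_j : i != j by rewrite neq_ltn ij.
apply: (foldr_lec_swap (enum_uniq _) (mem_enum _ i) (mem_enum _ j) i_ne_j).
- by move=> k; apply: g_in01.
- by move=> k; apply: g_in01.
- by move=> k ki kj; rewrite permM tpermD // eq_sym.
- by rewrite !permM tpermL tpermR; apply: g_exchange => //; exact: y_mono (ltnW ij).
Qed.

Lemma foldr_lec_id (t : 'S_n) : lec (F t) (F 1).
Proof.
move: t; apply: (perm_tperm_ind (rho := 1)) => [|t i j ij below_i tj IH].
  exact: lec_refl.
apply: lec_trans (foldr_lec_tperm ij _) IH.
case: x_sorted => _ x_mono; rewrite tj perm1; apply: x_mono.
rewrite leqNgt; apply/negP => lt_ti.
have := below_i _ lt_ti; rewrite perm1 => /perm_inj eti.
by rewrite eti ltnn in lt_ti.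
Qed.

Lemma foldr_lec_rev (t : 'S_n) : lec (F (perm (@rev_ord_inj n))) (F t).
Proof.
move: t; apply: perm_tperm_ind => [|t i j ij below_i tj IH].
  exact: lec_refl.
apply: lec_trans IH _.
have -> : F t = F (tperm i j * (tperm i j * t))%g by rewrite mulgA tperm2 mul1g.
apply: foldr_lec_tperm => //; rewrite !permM tpermL tpermR tj permE.
case: x_sorted => _ x_mono; apply: x_mono.
rewrite leqNgt; apply/negP => lt_rev.
have lt_i : (rev_ord (t i) < i)%N.
  by move: lt_rev; rewrite /=; have := ltn_ord (t i); have := ltn_ord i; lia.
have := below_i _ lt_i; rewrite permE rev_ordK => /perm_inj eti.
by move: lt_i; rewrite eti ltnn.
Qed.

Lemma foldr_rearrangement (s : 'S_n) :
  lec (foldr op e [seq g (x (rev_ord k)) (y k) | k <- enum 'I_n])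
      (foldr op e [seq g (x (s k)) (y k) | k <- enum 'I_n]) /\
  lec (foldr op e [seq g (x (s k)) (y k) | k <- enum 'I_n])
      (foldr op e [seq g (x k) (y k) | k <- enum 'I_n]).
Proof.
have F1 : F 1 = foldr op e [seq g (x k) (y k) | k <- enum 'I_n].
  by rewrite /F; congr foldr; apply/eq_map => k; rewrite perm1.
have Frev : F (perm (@rev_ord_inj n)) =
            foldr op e [seq g (x (rev_ord k)) (y k) | k <- enum 'I_n].
  by rewrite /F; congr foldr; apply/eq_map => k; rewrite permE.
by rewrite -F1 -Frev; split; [exact: foldr_lec_rev | exact: foldr_lec_id].
Qed.

End FoldRearrangement.

Theorem theorem9 (R : realType) (tn tc : R -> R -> R) :
  tnorm tn -> tconorm tc ->
  archimedean_copula tn -> archimedean_copula (Phi tc) ->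
  rearrangement_ineq tn tc /\ dual_rearrangement_ineq tn tc.
Proof.
move=> tnorm_tn tconorm_tc [copula_tn _] [copulaP [tnormP _]].
have [_ [tn01 _ _ tn_monol _]] := tnorm_tn.
have [_ [tc01 _ _ tc_monol _]] := tconorm_tc.
split=> n _ x y s x_sorted y_sorted; rewrite /iter_op.
- exact: (foldr_rearrangement (lec := <=%R) tconorm_tc lexx le_trans tc_monol tn01
    (tconorm_tnorm_exchange copula_tn tnormP copulaP) x_sorted y_sorted s).
- exact: (foldr_rearrangement (lec := >=%R) tnorm_tn lexx ge_trans
    (fun u v w u01 v01 w01 => tn_monol v u w v01 u01 w01) tc01
    (tnorm_tconorm_exchange tnorm_tn copula_tn tconorm_tc copulaP) x_sorted y_sorted s).
Qed.
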